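(* Let $\{(\Gamma_t,\theta_t)\}_{t\in[0,\underline t)}$ solve the framed curvature flow, with $\kappa>0$ so that the torsion is defined. Then $$\frac{d}{dt}\int_{\Gamma_t}\tau\,ds=\frac{d}{dt}\int_{\Gamma_t}\psi_3\,ds=\int_{\Gamma_t}\big(\psi_1\psi_3\kappa+\psi_2\,\partial_s\kappa\big)\,ds .$$
   Context: $S^1=\mathbb{R}/2\pi\mathbb{Z}$; closed curves $\Gamma_t$ parametrized by $\gamma(t,\cdot):S^1\to\mathbb{R}^3$, $g=\|\partial_u\gamma\|$, $ds=g\,du$, $\partial_s=g^{-1}\partial_u$; Frenet frame $T,N,B$, curvature $\kappa$, torsion $\tau$. For an angle function $\theta\in\mathcal C^{1,2}([0,\underline t)\times S^1;S^1)$: $\nu_\theta=\cos\theta N+\sin\theta B$, $\psi_1=\kappa\cos\theta$, $\psi_2=\kappa\sin\theta$, $\psi_3=\tau+\partial_s\theta$. Framed curvature flow: $\partial_t\gamma=\kappa\nu_\theta$, $\partial_t\theta=\upsilon_\theta$ with $\upsilon_\theta\in\mathcal C^1$. *)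

From Stdlib Require Import Reals Lra List.
From Coquelicot Require Import Coquelicot.
Open Scope R_scope.

Definition V3 := (R * R * R)%type.
Definition mk3 (a b c : R) : V3 := (a, b, c).
Definition vx (v : V3) : R := fst (fst v).
Definition vy (v : V3) : R := snd (fst v).
Definition vz (v : V3) : R := snd v.
Definition vadd (v w : V3) : V3 := mk3 (vx v + vx w) (vy v + vy w) (vz v + vz w).
Definition vscal (a : R) (v : V3) : V3 := mk3 (a * vx v) (a * vy v) (a * vz v).
Definition dot (v w : V3) : R := vx v * vx w + vy v * vy w + vz v * vz w.
Definition cross (v w : V3) : V3 :=
  mk3 (vy v * vz w - vz v * vy w) (vz v * vx w - vx v * vz w) (vx v * vy w - vy v * vx w).
Definition vnorm (v : V3) : R := sqrt (dot v v).

Definition du (f : R -> R -> R) : R -> R -> R := fun t u => Derive (fun v => f t v) u.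
Definition dt (f : R -> R -> R) : R -> R -> R := fun t u => Derive (fun s => f s u) t.

Definition Vdu (F : R -> R -> V3) : R -> R -> V3 := fun t u =>
  mk3 (du (fun t u => vx (F t u)) t u) (du (fun t u => vy (F t u)) t u)
      (du (fun t u => vz (F t u)) t u).
Definition Vdt (F : R -> R -> V3) : R -> R -> V3 := fun t u =>
  mk3 (dt (fun t u => vx (F t u)) t u) (dt (fun t u => vy (F t u)) t u)
      (dt (fun t u => vz (F t u)) t u).

Fixpoint pd (w : list bool) (f : R -> R -> R) : R -> R -> R :=
  match w with
  | nil => f
  | b :: w' => if b then dt (pd w' f) else du (pd w' f)
  end.

Definition smooth_on (D : R -> R -> Prop) (f : R -> R -> R) : Prop :=
  forall (w : list bool) (t u : R), D t u ->
    continuous (fun p : R * R => pd w f (fst p) (snd p)) (t, u) /\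
    ex_derive (fun s => pd w f s u) t /\
    ex_derive (fun v => pd w f t v) u.

Definition Vsmooth_on (D : R -> R -> Prop) (F : R -> R -> V3) : Prop :=
  smooth_on D (fun t u => vx (F t u)) /\ smooth_on D (fun t u => vy (F t u)) /\
  smooth_on D (fun t u => vz (F t u)).

(** Geometry of the curves Gamma_t parametrized by gam(t, .) : R -> R^3
    (2*PI-periodic, i.e. S^1 = R / 2 PI Z). *)
Section Geometry.
Variable gam : R -> R -> V3.

Definition speed (t u : R) : R := vnorm (Vdu gam t u).
Definition ds (f : R -> R -> R) : R -> R -> R := fun t u => du f t u / speed t u.
Definition Vds (F : R -> R -> V3) : R -> R -> V3 := fun t u => vscal (/ speed t u) (Vdu F t u).

Definition Tg : R -> R -> V3 := Vds gam.
Definition kappa (t u : R) : R := vnorm (Vds Tg t u).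
Definition Ng (t u : R) : V3 := vscal (/ kappa t u) (Vds Tg t u).
Definition Bg (t u : R) : V3 := cross (Tg t u) (Ng t u).
Definition tau (t u : R) : R := dot (Vds Ng t u) (Bg t u).

Variable theta : R -> R -> R.
Definition nu_theta (t u : R) : V3 :=
  vadd (vscal (cos (theta t u)) (Ng t u)) (vscal (sin (theta t u)) (Bg t u)).
Definition psi1 (t u : R) : R := kappa t u * cos (theta t u).
Definition psi2 (t u : R) : R := kappa t u * sin (theta t u).
Definition psi3 (t u : R) : R := tau t u + ds theta t u.

Definition curve_int (f : R -> R -> R) (t : R) : R :=
  RInt (fun u => f t u * speed t u) 0 (2 * PI).
End Geometry.

From Stdlib Require Import Reals Lra Lia.
From Coquelicot Require Import Coquelicot.
Open Scope R_scope.

(* The torsion enters through [twist_u = <d_u N, B> = tau g].  Its companion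
   [twist_t = <d_t N, B>] satisfies, since [d_t d_u N = d_u d_t N] and after expanding
   [<d_u N, d_t B>] and [<d_t N, d_u B>] in the orthonormal frame (T, N, B),
     d_t twist_u - d_u twist_t = g kappa <d_t T, B>,
   and along the flow [d_t gamma = psi1 N + psi2 B] the right-hand side equals
   (psi1 psi3 kappa + psi2 d_s kappa) g.  Integrating over the closed curve, the exact
   term [d_u twist_t] drops out by periodicity.  Finally [psi3 g = twist_u + d_u theta],
   and [d_u theta] integrates to theta(2 pi) - theta(0): an integer multiple of 2 pi
   depending continuously on t, hence constant in time. *)

(** * Smooth functions on a time strip *)

Section Smoothness.
Variables a b : R.

Definition in_strip (t : R) : Prop := a < t < b.

Lemma locally_2d_strip (P : R -> R -> Prop) t u :
  (forall s v, in_strip s -> P s v) -> in_strip t -> locally_2d P t u.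
Proof.
  intros HP [Hat Htb].
  assert (Hr : 0 < Rmin (t - a) (b - t)) by (apply Rmin_pos; lra).
  exists (mkposreal _ Hr). intros s v Hs _. apply HP. simpl in Hs.
  apply Rabs_lt_between' in Hs.
  pose proof (Rmin_l (t - a) (b - t)); pose proof (Rmin_r (t - a) (b - t)).
  split; lra.
Qed.

Lemma locally_strip t : in_strip t -> locally t in_strip.
Proof.
  intros Ht. apply (locally_2d_1d_const_y (fun s _ => in_strip s) t 0).
  now apply locally_2d_strip.
Qed.

Lemma locally_strip_impl (P : R -> Prop) t :
  (forall s, in_strip s -> P s) -> in_strip t -> locally t P.
Proof. intros HP Ht. exact (filter_imp _ _ HP (locally_strip t Ht)). Qed.

Definition continuous2 (f : R -> R -> R) (t u : R) : Prop :=
  continuous (fun p : R * R => f (fst p) (snd p)) (t, u).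

Definition has_partials (f : R -> R -> R) (t u : R) : Prop :=
  continuous2 f t u /\ ex_derive (fun s => f s u) t /\ ex_derive (fun v => f t v) u.

(* Unlike [smooth_on], which quantifies over words of partial derivatives, this
   form makes closure under products and compositions an induction on [n]. *)
Fixpoint of_class (n : nat) (f : R -> R -> R) : Prop :=
  match n with
  | O => forall t u, in_strip t -> continuous2 f t u
  | S m => (forall t u, in_strip t -> has_partials f t u) /\
           of_class m (dt f) /\ of_class m (du f)
  end.

Definition smooth (f : R -> R -> R) : Prop := forall n, of_class n f.

Lemma continuous2_ext f g t u :
  (forall s v, in_strip s -> f s v = g s v) -> in_strip t ->
  continuous2 f t u -> continuous2 g t u.
Proof.
  intros E Ht. apply continuous_ext_loc.
  apply (proj1 (locally_2d_locally (fun s v => f s v = g s v) t u)).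
  now apply locally_2d_strip.
Qed.

Lemma dt_ext f g t u :
  (forall s v, in_strip s -> f s v = g s v) -> in_strip t -> dt f t u = dt g t u.
Proof. intros E Ht. apply Derive_ext_loc. apply locally_strip_impl; auto. Qed.

Lemma du_ext f g t u :
  (forall s v, in_strip s -> f s v = g s v) -> in_strip t -> du f t u = du g t u.
Proof. intros E Ht. apply Derive_ext. auto. Qed.

Lemma has_partials_ext f g t u :
  (forall s v, in_strip s -> f s v = g s v) -> in_strip t ->
  has_partials f t u -> has_partials g t u.
Proof.
  intros E Ht (C & Es & Ev). split; [|split].
  - exact (continuous2_ext f g t u E Ht C).
  - apply (ex_derive_ext_loc (fun s => f s u)); auto.
    apply locally_strip_impl; auto.
  - apply (ex_derive_ext (fun v => f t v)); auto.
Qed.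

Lemma of_class_ext n : forall f g,
  (forall t u, in_strip t -> f t u = g t u) -> of_class n f -> of_class n g.
Proof.
  induction n as [|n IH]; intros f g E Hf.
  - intros t u Ht. apply (continuous2_ext f); auto.
  - destruct Hf as (Hp & Hdt & Hdu). split; [|split].
    + intros t u Ht. apply (has_partials_ext f); auto.
    + apply (IH (dt f)); auto. intros t u Ht. now apply dt_ext.
    + apply (IH (du f)); auto. intros t u Ht. now apply du_ext.
Qed.

Lemma of_class_pred n f : of_class (S n) f -> of_class n f.
Proof.
  revert f. induction n as [|n IH]; intros f (Hp & Hdt & Hdu).
  - intros t u Ht. apply Hp, Ht.
  - split; [exact Hp|]. split; apply IH; assumption.
Qed.

Lemma of_class_has_partials n f t u :
  of_class (S n) f -> in_strip t -> has_partials f t u.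
Proof. intros Hf Ht. exact (proj1 Hf t u Ht). Qed.

Lemma of_class_ex_derive_t n f t u :
  of_class (S n) f -> in_strip t -> ex_derive (fun s => f s u) t.
Proof. intros Hf Ht. apply (of_class_has_partials n f t u Hf Ht). Qed.

Lemma of_class_ex_derive_u n f t u :
  of_class (S n) f -> in_strip t -> ex_derive (fun v => f t v) u.
Proof. intros Hf Ht. apply (of_class_has_partials n f t u Hf Ht). Qed.

Lemma of_class_continuous n f t u : of_class n f -> in_strip t -> continuous2 f t u.
Proof. destruct n as [|n]; intros Hf Ht; [exact (Hf t u Ht)|]. apply Hf, Ht. Qed.

Lemma of_class_S n h h_t h_u :
  (forall t u, in_strip t -> has_partials h t u) ->
  (forall t u, in_strip t -> dt h t u = h_t t u) ->
  (forall t u, in_strip t -> du h t u = h_u t u) ->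
  of_class n h_t -> of_class n h_u -> of_class (S n) h.
Proof.
  intros Hp Et Eu Hht Hhu. split; [exact Hp|]. split.
  - apply (of_class_ext n h_t); auto. intros; symmetry; auto.
  - apply (of_class_ext n h_u); auto. intros; symmetry; auto.
Qed.

Lemma has_partials_plus f g t u : has_partials f t u -> has_partials g t u ->
  has_partials (fun t u => f t u + g t u) t u.
Proof.
  intros (Cf & Sf & Vf) (Cg & Sg & Vg). split; [|split].
  - exact (continuous_plus _ _ (t, u) Cf Cg).
  - exact (ex_derive_plus _ _ t Sf Sg).
  - exact (ex_derive_plus _ _ u Vf Vg).
Qed.

Lemma has_partials_mult f g t u : has_partials f t u -> has_partials g t u ->
  has_partials (fun t u => f t u * g t u) t u.
Proof.
  intros (Cf & Sf & Vf) (Cg & Sg & Vg). split; [|split].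
  - exact (continuous_mult _ _ (t, u) Cf Cg).
  - exact (ex_derive_mult _ _ t Sf Sg).
  - exact (ex_derive_mult _ _ u Vf Vg).
Qed.

Lemma has_partials_comp (phi : R -> R) f t u : ex_derive phi (f t u) ->
  has_partials f t u -> has_partials (fun t u => phi (f t u)) t u.
Proof.
  intros Hphi (Cf & Sf & Vf). split; [|split].
  - exact (continuous_comp _ phi (t, u) Cf (ex_derive_continuous phi _ Hphi)).
  - exact (ex_derive_comp phi (fun s => f s u) t Hphi Sf).
  - exact (ex_derive_comp phi (fun v => f t v) u Hphi Vf).
Qed.

Lemma of_class_const n : forall c, of_class n (fun _ _ => c).
Proof.
  induction n as [|n IH]; intros c.
  - intros t u _. apply continuous_const.
  - apply (of_class_S n _ (fun _ _ => 0) (fun _ _ => 0)); auto;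
      intros t u _; [|exact (Derive_const _ _)..].
    split; [apply continuous_const|split; apply ex_derive_const].
Qed.

Lemma of_class_plus n : forall f g, of_class n f -> of_class n g ->
  of_class n (fun t u => f t u + g t u).
Proof.
  induction n as [|n IH]; intros f g Hf Hg.
  - intros t u Ht. exact (continuous_plus _ _ (t, u) (Hf t u Ht) (Hg t u Ht)).
  - apply (of_class_S n _ (fun t u => dt f t u + dt g t u) (fun t u => du f t u + du g t u)).
    + intros t u Ht. apply has_partials_plus; now apply (of_class_has_partials n).
    + intros t u Ht. apply (Derive_plus (fun s => f s u) (fun s => g s u));
        now apply (of_class_ex_derive_t n).
    + intros t u Ht. apply (Derive_plus (fun v => f t v) (fun v => g t v));
        now apply (of_class_ex_derive_u n).
    + apply IH; [apply Hf|apply Hg].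
    + apply IH; [apply Hf|apply Hg].
Qed.

Lemma of_class_mult n : forall f g, of_class n f -> of_class n g ->
  of_class n (fun t u => f t u * g t u).
Proof.
  induction n as [|n IH]; intros f g Hf Hg.
  - intros t u Ht. exact (continuous_mult _ _ (t, u) (Hf t u Ht) (Hg t u Ht)).
  - apply (of_class_S n _ (fun t u => dt f t u * g t u + f t u * dt g t u)
                          (fun t u => du f t u * g t u + f t u * du g t u)).
    + intros t u Ht. apply has_partials_mult; now apply (of_class_has_partials n).
    + intros t u Ht. apply (Derive_mult (fun s => f s u) (fun s => g s u));
        now apply (of_class_ex_derive_t n).
    + intros t u Ht. apply (Derive_mult (fun v => f t v) (fun v => g t v));
        now apply (of_class_ex_derive_u n).
    + apply of_class_plus; apply IH; auto using of_class_pred; [apply Hf|apply Hg].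
    + apply of_class_plus; apply IH; auto using of_class_pred; [apply Hf|apply Hg].
Qed.

Lemma of_class_opp n f : of_class n f -> of_class n (fun t u => - f t u).
Proof.
  intros Hf. apply (of_class_ext n (fun t u => -1 * f t u)); [intros; ring|].
  apply of_class_mult; [apply of_class_const|exact Hf].
Qed.

Definition preserves_class (n : nat) (P : R -> Prop) (phi : R -> R) : Prop :=
  forall f, of_class n f -> (forall t u, in_strip t -> P (f t u)) ->
    of_class n (fun t u => phi (f t u)).

Lemma preserves_class_0 P phi :
  (forall x, P x -> ex_derive phi x) -> preserves_class 0 P phi.
Proof.
  intros Hphi f Hf HP t u Ht.
  exact (continuous_comp _ phi (t, u) (Hf t u Ht)
           (ex_derive_continuous phi _ (Hphi _ (HP t u Ht)))).
Qed.

(* Chain rule: [d (phi o f) = phi' o f * d f], so one more derivative of [phi o f]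
   costs one derivative of [phi']. *)
Lemma preserves_class_S n P phi phi' :
  (forall x, P x -> is_derive phi x (phi' x)) ->
  preserves_class n P phi' -> preserves_class (S n) P phi.
Proof.
  intros Hphi Hphi' f Hf HP.
  assert (Dphi : forall x, P x -> Derive phi x = phi' x)
    by (intros x Hx; apply is_derive_unique, Hphi, Hx).
  assert (Ephi : forall t u, in_strip t -> ex_derive phi (f t u))
    by (intros t u Ht; eexists; apply Hphi, HP, Ht).
  apply (of_class_S n _ (fun t u => dt f t u * phi' (f t u))
                        (fun t u => du f t u * phi' (f t u))).
  - intros t u Ht. apply has_partials_comp; [auto|now apply (of_class_has_partials n)].
  - intros t u Ht. unfold dt. rewrite (Derive_comp phi (fun s => f s u)), Dphi; auto.
    now apply (of_class_ex_derive_t n).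
  - intros t u Ht. unfold du. rewrite (Derive_comp phi (fun v => f t v)), Dphi; auto.
    now apply (of_class_ex_derive_u n).
  - apply of_class_mult; [apply Hf|apply Hphi'; [apply of_class_pred|]; auto].
  - apply of_class_mult; [apply Hf|apply Hphi'; [apply of_class_pred|]; auto].
Qed.

Lemma preserves_class_sin_cos n :
  preserves_class n (fun _ => True) sin /\ preserves_class n (fun _ => True) cos.
Proof.
  induction n as [|n [Hsin Hcos]].
  - split; apply preserves_class_0; intros x _; eexists;
      [apply is_derive_sin|apply is_derive_cos].
  - split.
    + apply (preserves_class_S n _ _ cos); auto. intros x _. apply is_derive_sin.
    + apply (preserves_class_S n _ _ (fun x => - sin x)).
      * intros x _. apply is_derive_cos.
      * intros f Hf HP. apply of_class_opp, Hsin; auto.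
Qed.

Lemma preserves_class_inv n : preserves_class n (fun x => x <> 0) Rinv.
Proof.
  induction n as [|n IH].
  - apply preserves_class_0. intros x Hx. eexists.
    apply (is_derive_inv (fun y => y)); [apply is_derive_id|exact Hx].
  - apply (preserves_class_S n _ _ (fun x => - (/ x * / x))).
    + intros x Hx. replace (- (/ x * / x)) with (- 1 / x ^ 2) by (field; exact Hx).
      apply (is_derive_inv (fun y => y) x 1); [exact (is_derive_id x)|exact Hx].
    + intros f Hf HP. apply of_class_opp, of_class_mult; apply IH; auto.
Qed.

Lemma preserves_class_sqrt n : preserves_class n (fun x => 0 < x) sqrt.
Proof.
  induction n as [|n IH].
  - apply preserves_class_0. intros x Hx. eexists.
    apply (is_derive_sqrt (fun y => y)); [apply is_derive_id|exact Hx].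
  - apply (preserves_class_S n _ _ (fun x => / (2 * sqrt x))).
    + intros x Hx. replace (/ (2 * sqrt x)) with (1 / (2 * sqrt x)) by (unfold Rdiv; ring).
      apply (is_derive_sqrt (fun y => y) x 1); [exact (is_derive_id x)|exact Hx].
    + intros f Hf HP. apply (preserves_class_inv n (fun t u => 2 * sqrt (f t u))).
      * apply of_class_mult; [apply of_class_const|apply IH; auto].
      * intros t u Ht. apply Rgt_not_eq, Rmult_lt_0_compat; [lra|apply sqrt_lt_R0; auto].
Qed.

Lemma smooth_plus f g : smooth f -> smooth g -> smooth (fun t u => f t u + g t u).
Proof. intros Hf Hg n. apply of_class_plus; auto. Qed.

Lemma smooth_mult f g : smooth f -> smooth g -> smooth (fun t u => f t u * g t u).
Proof. intros Hf Hg n. apply of_class_mult; auto. Qed.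

Lemma smooth_minus f g : smooth f -> smooth g -> smooth (fun t u => f t u - g t u).
Proof. intros Hf Hg n. apply of_class_plus, of_class_opp; auto. Qed.

Lemma smooth_inv f : smooth f -> (forall t u, in_strip t -> f t u <> 0) ->
  smooth (fun t u => / f t u).
Proof. intros Hf Hnz n. apply preserves_class_inv; auto. Qed.

Lemma smooth_sqrt f : smooth f -> (forall t u, in_strip t -> 0 < f t u) ->
  smooth (fun t u => sqrt (f t u)).
Proof. intros Hf Hpos n. apply preserves_class_sqrt; auto. Qed.

Lemma smooth_sin f : smooth f -> smooth (fun t u => sin (f t u)).
Proof. intros Hf n. apply preserves_class_sin_cos; auto. Qed.

Lemma smooth_cos f : smooth f -> smooth (fun t u => cos (f t u)).
Proof. intros Hf n. apply preserves_class_sin_cos; auto. Qed.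

Lemma smooth_dt f : smooth f -> smooth (dt f).
Proof. intros Hf n. apply (Hf (S n)). Qed.

Lemma smooth_du f : smooth f -> smooth (du f).
Proof. intros Hf n. apply (Hf (S n)). Qed.

Lemma smooth_continuous2 f t u : smooth f -> in_strip t -> continuous2 f t u.
Proof. intros Hf. apply (of_class_continuous 0), Hf. Qed.

Lemma smooth_ex_derive_t f t u : smooth f -> in_strip t -> ex_derive (fun s => f s u) t.
Proof. intros Hf. apply (of_class_ex_derive_t 0), Hf. Qed.

Lemma smooth_ex_derive_u f t u : smooth f -> in_strip t -> ex_derive (fun v => f t v) u.
Proof. intros Hf. apply (of_class_ex_derive_u 0), Hf. Qed.

Lemma smooth_continuous_u f t u : smooth f -> in_strip t -> continuous (fun v => f t v) u.
Proof.
  intros Hf Ht. apply (continuous_comp_2 (fun _ => t) (fun v => v) f u);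
    [apply continuous_const|apply continuous_id|exact (smooth_continuous2 f t u Hf Ht)].
Qed.

Lemma smooth_continuous_t f t u : smooth f -> in_strip t -> continuous (fun s => f s u) t.
Proof.
  intros Hf Ht. apply (continuous_comp_2 (fun s => s) (fun _ => u) f t);
    [apply continuous_id|apply continuous_const|exact (smooth_continuous2 f t u Hf Ht)].
Qed.

Lemma smooth_dt_du f t u : smooth f -> in_strip t -> dt (du f) t u = du (dt f) t u.
Proof.
  intros Hf Ht. apply Schwarz.
  - apply locally_2d_strip; auto. intros s v Hs. repeat split.
    + exact (smooth_ex_derive_t f s v Hf Hs).
    + exact (smooth_ex_derive_u f s v Hf Hs).
    + exact (smooth_ex_derive_t (du f) s v (smooth_du f Hf) Hs).
    + exact (smooth_ex_derive_u (dt f) s v (smooth_dt f Hf) Hs).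
  - apply continuity_2d_pt_filterlim, (smooth_continuous2 (dt (du f))); auto.
    apply smooth_dt, smooth_du, Hf.
  - apply continuity_2d_pt_filterlim, (smooth_continuous2 (du (dt f))); auto.
    apply smooth_du, smooth_dt, Hf.
Qed.

Lemma smooth_on_smooth f : smooth_on (fun t _ => in_strip t) f -> smooth f.
Proof.
  intros H n. cut (forall w, of_class n (pd w f)); [intros C; apply (C nil)|].
  induction n as [|n IH]; intros w.
  - intros t u Ht. apply (H w t u Ht).
  - split; [intros t u Ht; apply (H w t u Ht)|].
    split; [apply (IH (cons true w))|apply (IH (cons false w))].
Qed.

Lemma ex_RInt_smooth f t c d : smooth f -> in_strip t -> ex_RInt (fun v => f t v) c d.
Proof.
  intros Hf Ht. apply (ex_RInt_continuous (V := R_CompleteNormedModule)).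
  intros v _. now apply smooth_continuous_u.
Qed.

Lemma RInt_du f t c d : smooth f -> in_strip t ->
  RInt (fun v => du f t v) c d = f t d - f t c.
Proof.
  intros Hf Ht. apply (RInt_Derive (fun v => f t v)); intros v _.
  - now apply smooth_ex_derive_u.
  - apply (smooth_continuous_u (du f)); auto. now apply smooth_du.
Qed.

Lemma is_derive_RInt_smooth f t c d : smooth f -> in_strip t ->
  is_derive (fun s => RInt (fun v => f s v) c d) t (RInt (fun v => dt f t v) c d).
Proof.
  intros Hf Ht. apply (is_derive_RInt_param f c d t).
  - apply locally_strip_impl; auto. intros s Hs v _. now apply smooth_ex_derive_t.
  - intros v _. apply continuity_2d_pt_filterlim, (smooth_continuous2 (dt f)); auto.
    now apply smooth_dt.
  - apply locally_strip_impl; auto. intros s Hs. now apply ex_RInt_smooth.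
Qed.

End Smoothness.

(** * Vector calculus in R^3 *)

Ltac v3_ring := repeat match goal with v : V3 |- _ => destruct v as [[? ?] ?] end;
  unfold dot, cross, vscal, vadd, mk3, vx, vy, vz; simpl; ring.

Lemma V3_ext v w : vx v = vx w -> vy v = vy w -> vz v = vz w -> v = w.
Proof.
  destruct v as [[x y] z], w as [[x' y'] z']. unfold vx, vy, vz; simpl.
  intros; subst; reflexivity.
Qed.

Lemma dot_comm v w : dot v w = dot w v.
Proof. v3_ring. Qed.

Lemma dot_scal_l c v w : dot (vscal c v) w = c * dot v w.
Proof. v3_ring. Qed.

Lemma dot_scal_r c v w : dot v (vscal c w) = c * dot v w.
Proof. v3_ring. Qed.

Lemma dot_add_l u v w : dot (vadd u v) w = dot u w + dot v w.
Proof. v3_ring. Qed.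

Lemma dot_cross_cross p q :
  dot (cross p q) (cross p q) = dot p p * dot q q - dot p q * dot p q.
Proof. v3_ring. Qed.

Lemma dot_cross_l p q : dot p (cross p q) = 0.
Proof. v3_ring. Qed.

Lemma dot_cross_r p q : dot q (cross p q) = 0.
Proof. v3_ring. Qed.

Lemma vscal_vscal c d v : vscal c (vscal d v) = vscal (c * d) v.
Proof.
  destruct v as [[x y] z]. unfold vscal, mk3, vx, vy, vz; simpl.
  f_equal; [f_equal|]; ring.
Qed.

Lemma vscal_vadd c v w : vscal c (vadd v w) = vadd (vscal c v) (vscal c w).
Proof.
  destruct v as [[x y] z], w as [[x' y'] z']. unfold vscal, vadd, mk3, vx, vy, vz; simpl.
  f_equal; [f_equal|]; ring.
Qed.

Lemma vscal_inv_cancel c v : c <> 0 -> vscal c (vscal (/ c) v) = v.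
Proof.
  intros Hc. destruct v as [[x y] z]. unfold vscal, mk3, vx, vy, vz; simpl.
  f_equal; [f_equal|]; field; exact Hc.
Qed.

Lemma dot_orthonormal_expand T N v w :
  dot T T = 1 -> dot N N = 1 -> dot T N = 0 ->
  dot v w = dot v T * dot w T + dot v N * dot w N + dot v (cross T N) * dot w (cross T N).
Proof.
  intros HT HN HTN.
  assert (E : dot v w * dot (cross T N) (cross T N) =
    dot v (cross T N) * dot w (cross T N) + dot v N * dot w N * dot T T
    - (dot v N * dot w T + dot v T * dot w N) * dot T N + dot v T * dot w T * dot N N)
    by v3_ring.
  rewrite dot_cross_cross, HT, HN, HTN in E. lra.
Qed.

Lemma dot_self_pos v : 0 < vnorm v -> 0 < dot v v.
Proof.
  intros H. destruct (Rle_or_lt (dot v v) 0) as [Hle|Hlt]; [|exact Hlt].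
  unfold vnorm in H. rewrite sqrt_neg_0 in H; lra.
Qed.

Lemma dot_normalize v :
  0 < vnorm v -> dot (vscal (/ vnorm v) v) (vscal (/ vnorm v) v) = 1.
Proof.
  intros H. rewrite dot_scal_l, dot_scal_r.
  replace (dot v v) with (vnorm v * vnorm v)
    by (unfold vnorm; rewrite sqrt_sqrt; [reflexivity|left; now apply dot_self_pos]).
  field. lra.
Qed.

Lemma Derive_shift f x c : Derive (fun y => f (y + c)) x = Derive f (x + c).
Proof.
  unfold Derive. f_equal. apply Lim_ext. intros h.
  replace (x + h + c) with (x + c + h) by ring. reflexivity.
Qed.

Definition vderive (F : R -> V3) (x : R) : V3 :=
  mk3 (Derive (fun y => vx (F y)) x) (Derive (fun y => vy (F y)) x)
      (Derive (fun y => vz (F y)) x).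

Definition ex_vderive (F : R -> V3) (x : R) : Prop :=
  ex_derive (fun y => vx (F y)) x /\ ex_derive (fun y => vy (F y)) x /\
  ex_derive (fun y => vz (F y)) x.

Lemma vderive_add F G x : ex_vderive F x -> ex_vderive G x ->
  vderive (fun y => vadd (F y) (G y)) x = vadd (vderive F x) (vderive G x).
Proof.
  intros (F1 & F2 & F3) (G1 & G2 & G3).
  unfold vderive, vadd, mk3, vx, vy, vz in *; simpl.
  f_equal; [f_equal|]; apply Derive_plus; assumption.
Qed.

Lemma vderive_scal (c : R -> R) F x : ex_derive c x -> ex_vderive F x ->
  vderive (fun y => vscal (c y) (F y)) x =
  vadd (vscal (Derive c x) (F x)) (vscal (c x) (vderive F x)).
Proof.
  intros Hc (F1 & F2 & F3).
  unfold vderive, vscal, vadd, mk3, vx, vy, vz in *; simpl.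
  f_equal; [f_equal|]; apply Derive_mult; assumption.
Qed.

Lemma Derive_dot F G x : ex_vderive F x -> ex_vderive G x ->
  Derive (fun y => dot (F y) (G y)) x = dot (vderive F x) (G x) + dot (F x) (vderive G x).
Proof.
  intros (F1 & F2 & F3) (G1 & G2 & G3). unfold dot.
  rewrite !Derive_plus, !Derive_mult; try assumption.
  - unfold vderive, vx, vy, vz, mk3; simpl. ring.
  - exact (ex_derive_mult _ _ x F1 G1).
  - exact (ex_derive_mult _ _ x F2 G2).
  - exact (ex_derive_plus _ _ x (ex_derive_mult _ _ x F1 G1) (ex_derive_mult _ _ x F2 G2)).
  - exact (ex_derive_mult _ _ x F3 G3).
Qed.

Lemma dot_vderive_locally_const F G x c : ex_vderive F x -> ex_vderive G x ->
  locally x (fun y => dot (F y) (G y) = c) ->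
  dot (vderive F x) (G x) + dot (F x) (vderive G x) = 0.
Proof.
  intros HF HG Hc. rewrite <- Derive_dot by assumption.
  rewrite (Derive_ext_loc _ (fun _ => c)) by exact Hc. apply Derive_const.
Qed.

Section VectorFields.
Variables a b : R.
Local Notation in_strip := (in_strip a b).
Local Notation smooth := (smooth a b).

Definition vsmooth (F : R -> R -> V3) : Prop :=
  smooth (fun t u => vx (F t u)) /\ smooth (fun t u => vy (F t u)) /\
  smooth (fun t u => vz (F t u)).

Lemma vsmooth_Vdu F : vsmooth F -> vsmooth (Vdu F).
Proof. intros (H1 & H2 & H3). split; [|split]; now apply smooth_du. Qed.

Lemma vsmooth_Vdt F : vsmooth F -> vsmooth (Vdt F).
Proof. intros (H1 & H2 & H3). split; [|split]; now apply smooth_dt. Qed.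

Lemma vsmooth_scal c F :
  smooth c -> vsmooth F -> vsmooth (fun t u => vscal (c t u) (F t u)).
Proof.
  intros Hc (F1 & F2 & F3).
  split; [|split]; apply (smooth_mult a b c (fun t u => _ (F t u))); assumption.
Qed.

Lemma vsmooth_cross F G :
  vsmooth F -> vsmooth G -> vsmooth (fun t u => cross (F t u) (G t u)).
Proof.
  intros (F1 & F2 & F3) (G1 & G2 & G3).
  split; [|split]; apply smooth_minus;
    apply (smooth_mult a b (fun t u => _ (F t u)) (fun t u => _ (G t u))); assumption.
Qed.

Lemma smooth_dot F G : vsmooth F -> vsmooth G -> smooth (fun t u => dot (F t u) (G t u)).
Proof.
  intros (F1 & F2 & F3) (G1 & G2 & G3).
  repeat apply smooth_plus;
    apply (smooth_mult a b (fun t u => _ (F t u)) (fun t u => _ (G t u))); assumption.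
Qed.

Lemma smooth_vnorm F : vsmooth F -> (forall t u, in_strip t -> 0 < vnorm (F t u)) ->
  smooth (fun t u => vnorm (F t u)).
Proof.
  intros HF Hpos. apply (smooth_sqrt a b (fun t u => dot (F t u) (F t u))).
  - now apply smooth_dot.
  - intros t u Ht. apply dot_self_pos, Hpos, Ht.
Qed.

Lemma vsmooth_ex_vderive_u F t u : vsmooth F -> in_strip t -> ex_vderive (fun v => F t v) u.
Proof.
  intros (F1 & F2 & F3) Ht.
  split; [|split]; apply (smooth_ex_derive_u a b (fun t u => _ (F t u))); assumption.
Qed.

Lemma vsmooth_ex_vderive_t F t u : vsmooth F -> in_strip t -> ex_vderive (fun s => F s u) t.
Proof.
  intros (F1 & F2 & F3) Ht.
  split; [|split]; apply (smooth_ex_derive_t a b (fun t u => _ (F t u))); assumption.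
Qed.

Lemma Vdu_ext F G t u : (forall v, F t v = G t v) -> Vdu F t u = Vdu G t u.
Proof. intros E. unfold Vdu, du. f_equal; apply Derive_ext; intros v; now rewrite E. Qed.

Lemma Vdu_add F G t u : vsmooth F -> vsmooth G -> in_strip t ->
  Vdu (fun t u => vadd (F t u) (G t u)) t u = vadd (Vdu F t u) (Vdu G t u).
Proof.
  intros HF HG Ht.
  exact (vderive_add _ _ u (vsmooth_ex_vderive_u F t u HF Ht) (vsmooth_ex_vderive_u G t u HG Ht)).
Qed.

Lemma Vdu_scal c F t u : smooth c -> vsmooth F -> in_strip t ->
  Vdu (fun t u => vscal (c t u) (F t u)) t u =
  vadd (vscal (du c t u) (F t u)) (vscal (c t u) (Vdu F t u)).
Proof.
  intros Hc HF Ht.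
  exact (vderive_scal _ _ u (smooth_ex_derive_u a b c t u Hc Ht)
           (vsmooth_ex_vderive_u F t u HF Ht)).
Qed.

Lemma Vdt_scal c F t u : smooth c -> vsmooth F -> in_strip t ->
  Vdt (fun t u => vscal (c t u) (F t u)) t u =
  vadd (vscal (dt c t u) (F t u)) (vscal (c t u) (Vdt F t u)).
Proof.
  intros Hc HF Ht.
  exact (vderive_scal _ _ t (smooth_ex_derive_t a b c t u Hc Ht)
           (vsmooth_ex_vderive_t F t u HF Ht)).
Qed.

Lemma du_dot F G t u : vsmooth F -> vsmooth G -> in_strip t ->
  du (fun t u => dot (F t u) (G t u)) t u =
  dot (Vdu F t u) (G t u) + dot (F t u) (Vdu G t u).
Proof.
  intros HF HG Ht.
  exact (Derive_dot _ _ u (vsmooth_ex_vderive_u F t u HF Ht) (vsmooth_ex_vderive_u G t u HG Ht)).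
Qed.

Lemma dt_dot F G t u : vsmooth F -> vsmooth G -> in_strip t ->
  dt (fun t u => dot (F t u) (G t u)) t u =
  dot (Vdt F t u) (G t u) + dot (F t u) (Vdt G t u).
Proof.
  intros HF HG Ht.
  exact (Derive_dot _ _ t (vsmooth_ex_vderive_t F t u HF Ht) (vsmooth_ex_vderive_t G t u HG Ht)).
Qed.

Lemma du_dot_const F G c t u : vsmooth F -> vsmooth G ->
  (forall t u, in_strip t -> dot (F t u) (G t u) = c) -> in_strip t ->
  dot (Vdu F t u) (G t u) + dot (F t u) (Vdu G t u) = 0.
Proof.
  intros HF HG Hc Ht.
  apply (dot_vderive_locally_const (fun v => F t v) (fun v => G t v) u c);
    [now apply vsmooth_ex_vderive_u..|].
  apply filter_forall. intros v. now apply Hc.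
Qed.

Lemma dt_dot_const F G c t u : vsmooth F -> vsmooth G ->
  (forall t u, in_strip t -> dot (F t u) (G t u) = c) -> in_strip t ->
  dot (Vdt F t u) (G t u) + dot (F t u) (Vdt G t u) = 0.
Proof.
  intros HF HG Hc Ht.
  apply (dot_vderive_locally_const (fun s => F s u) (fun s => G s u) t c);
    [now apply vsmooth_ex_vderive_t..|].
  apply (locally_strip_impl a b); auto.
Qed.

Lemma dot_Vdu_unit F t u : vsmooth F ->
  (forall t u, in_strip t -> dot (F t u) (F t u) = 1) -> in_strip t ->
  dot (F t u) (Vdu F t u) = 0.
Proof.
  intros HF H1 Ht. pose proof (du_dot_const F F 1 t u HF HF H1 Ht) as E.
  rewrite dot_comm in E. lra.
Qed.

Lemma dot_Vdt_unit F t u : vsmooth F ->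
  (forall t u, in_strip t -> dot (F t u) (F t u) = 1) -> in_strip t ->
  dot (F t u) (Vdt F t u) = 0.
Proof.
  intros HF H1 Ht. pose proof (dt_dot_const F F 1 t u HF HF H1 Ht) as E.
  rewrite dot_comm in E. lra.
Qed.

Lemma Vdt_Vdu F t u : vsmooth F -> in_strip t -> Vdt (Vdu F) t u = Vdu (Vdt F) t u.
Proof.
  intros (F1 & F2 & F3) Ht. apply V3_ext;
    [exact (smooth_dt_du a b _ t u F1 Ht)|exact (smooth_dt_du a b _ t u F2 Ht)|
     exact (smooth_dt_du a b _ t u F3 Ht)].
Qed.

End VectorFields.

(** * Frenet frame along the framed curvature flow *)

Definition torsion_rate (gam : R -> R -> V3) (theta : R -> R -> R) (t u : R) : R :=
  psi1 gam theta t u * psi3 gam theta t u * kappa gam t u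
  + psi2 gam theta t u * ds gam (kappa gam) t u.

Section FramedCurve.
Variables (a b : R) (gam : R -> R -> V3).
Local Notation in_strip := (in_strip a b).
Local Notation smooth := (smooth a b).
Local Notation vsmooth := (vsmooth a b).
Hypothesis gam_smooth : vsmooth gam.
Hypothesis speed_pos : forall t u, in_strip t -> 0 < speed gam t u.
Hypothesis kappa_pos : forall t u, in_strip t -> 0 < kappa gam t u.

Lemma speed_neq0 t u : in_strip t -> speed gam t u <> 0.
Proof. intros Ht. apply Rgt_not_eq, speed_pos, Ht. Qed.

Lemma kappa_neq0 t u : in_strip t -> kappa gam t u <> 0.
Proof. intros Ht. apply Rgt_not_eq, kappa_pos, Ht. Qed.

Lemma smooth_speed : smooth (speed gam).
Proof. exact (smooth_vnorm a b _ (vsmooth_Vdu a b gam gam_smooth) speed_pos). Qed.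

Lemma smooth_inv_speed : smooth (fun t u => / speed gam t u).
Proof. exact (smooth_inv a b (speed gam) smooth_speed speed_neq0). Qed.

Lemma vsmooth_T : vsmooth (Tg gam).
Proof. exact (vsmooth_scal a b _ _ smooth_inv_speed (vsmooth_Vdu a b gam gam_smooth)). Qed.

Lemma vsmooth_curvature_vector : vsmooth (Vds gam (Tg gam)).
Proof. exact (vsmooth_scal a b _ _ smooth_inv_speed (vsmooth_Vdu a b _ vsmooth_T)). Qed.

Lemma smooth_kappa : smooth (kappa gam).
Proof. exact (smooth_vnorm a b _ vsmooth_curvature_vector kappa_pos). Qed.

Lemma vsmooth_N : vsmooth (Ng gam).
Proof.
  apply (vsmooth_scal a b (fun t u => / kappa gam t u)); [|exact vsmooth_curvature_vector].
  exact (smooth_inv a b (kappa gam) smooth_kappa kappa_neq0).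
Qed.

Lemma vsmooth_B : vsmooth (Bg gam).
Proof. exact (vsmooth_cross a b _ _ vsmooth_T vsmooth_N). Qed.

Lemma Vdu_gam t u : in_strip t -> Vdu gam t u = vscal (speed gam t u) (Tg gam t u).
Proof. intros Ht. symmetry. apply vscal_inv_cancel, speed_neq0, Ht. Qed.

Lemma Vdu_T t u : in_strip t ->
  Vdu (Tg gam) t u = vscal (speed gam t u * kappa gam t u) (Ng gam t u).
Proof.
  intros Ht. unfold Ng, Vds.
  rewrite <- vscal_vscal, !vscal_inv_cancel; auto using speed_neq0, kappa_neq0.
Qed.

Lemma dot_TT t u : in_strip t -> dot (Tg gam t u) (Tg gam t u) = 1.
Proof. intros Ht. exact (dot_normalize _ (speed_pos t u Ht)). Qed.

Lemma dot_NN t u : in_strip t -> dot (Ng gam t u) (Ng gam t u) = 1.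
Proof. intros Ht. exact (dot_normalize _ (kappa_pos t u Ht)). Qed.

Lemma dot_TN t u : in_strip t -> dot (Tg gam t u) (Ng gam t u) = 0.
Proof.
  intros Ht. unfold Ng, Vds. rewrite !dot_scal_r.
  rewrite (dot_Vdu_unit a b (Tg gam) t u vsmooth_T dot_TT Ht). ring.
Qed.

Lemma dot_BB t u : in_strip t -> dot (Bg gam t u) (Bg gam t u) = 1.
Proof. intros Ht. unfold Bg. rewrite dot_cross_cross, dot_TT, dot_NN, dot_TN; auto. ring. Qed.

Lemma dot_TB t u : dot (Tg gam t u) (Bg gam t u) = 0.
Proof. apply dot_cross_l. Qed.

Lemma dot_NB t u : dot (Ng gam t u) (Bg gam t u) = 0.
Proof. apply dot_cross_r. Qed.

Lemma dot_VduN_T t u : in_strip t ->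
  dot (Vdu (Ng gam) t u) (Tg gam t u) = - (speed gam t u * kappa gam t u).
Proof.
  intros Ht. pose proof (du_dot_const a b _ _ 0 t u vsmooth_T vsmooth_N dot_TN Ht) as E.
  rewrite Vdu_T, dot_scal_l, dot_NN in E by exact Ht. rewrite dot_comm. lra.
Qed.

Lemma dot_T_VduB t u : in_strip t -> dot (Tg gam t u) (Vdu (Bg gam) t u) = 0.
Proof.
  intros Ht.
  pose proof (du_dot_const a b _ _ 0 t u vsmooth_T vsmooth_B (fun t u _ => dot_TB t u) Ht) as E.
  rewrite Vdu_T, dot_scal_l, dot_NB in E by exact Ht. lra.
Qed.

Lemma dot_T_VdtB t u : in_strip t ->
  dot (Tg gam t u) (Vdt (Bg gam) t u) = - dot (Vdt (Tg gam) t u) (Bg gam t u).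
Proof.
  intros Ht.
  pose proof (dt_dot_const a b _ _ 0 t u vsmooth_T vsmooth_B (fun t u _ => dot_TB t u) Ht).
  lra.
Qed.

Definition twist_u (t u : R) : R := dot (Vdu (Ng gam) t u) (Bg gam t u).
Definition twist_t (t u : R) : R := dot (Vdt (Ng gam) t u) (Bg gam t u).

Lemma smooth_twist_u : smooth twist_u.
Proof. exact (smooth_dot a b _ _ (vsmooth_Vdu a b _ vsmooth_N) vsmooth_B). Qed.

Lemma smooth_twist_t : smooth twist_t.
Proof. exact (smooth_dot a b _ _ (vsmooth_Vdt a b _ vsmooth_N) vsmooth_B). Qed.

Lemma tau_speed t u : in_strip t -> tau gam t u * speed gam t u = twist_u t u.
Proof.
  intros Ht. pose proof (speed_pos t u Ht).
  unfold tau, Vds, twist_u. rewrite dot_scal_l. field. lra.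
Qed.

Lemma dt_twist_u_minus_du_twist_t t u : in_strip t ->
  dt twist_u t u - du twist_t t u =
  dot (Vdu (Ng gam) t u) (Vdt (Bg gam) t u) - dot (Vdt (Ng gam) t u) (Vdu (Bg gam) t u).
Proof.
  intros Ht. unfold twist_u, twist_t.
  rewrite (dt_dot a b (Vdu (Ng gam))), (du_dot a b (Vdt (Ng gam))), (Vdt_Vdu a b (Ng gam));
    auto using vsmooth_N, vsmooth_B, vsmooth_Vdu, vsmooth_Vdt.
  ring.
Qed.

Lemma dot_VduN_VdtB t u : in_strip t ->
  dot (Vdu (Ng gam) t u) (Vdt (Bg gam) t u) =
  speed gam t u * kappa gam t u * dot (Vdt (Tg gam) t u) (Bg gam t u).
Proof.
  intros Ht.
  rewrite (dot_orthonormal_expand _ _ _ _ (dot_TT t u Ht) (dot_NN t u Ht) (dot_TN t u Ht)).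
  fold (Bg gam t u).
  rewrite dot_VduN_T, (dot_comm _ (Tg gam t u)), dot_T_VdtB,
    (dot_comm _ (Ng gam t u)), (dot_Vdu_unit a b (Ng gam)),
    (dot_comm (Vdt (Bg gam) t u) (Bg gam t u)), (dot_Vdt_unit a b (Bg gam));
    auto using vsmooth_N, vsmooth_B, dot_NN, dot_BB.
  ring.
Qed.

Lemma dot_VdtN_VduB t u : in_strip t -> dot (Vdt (Ng gam) t u) (Vdu (Bg gam) t u) = 0.
Proof.
  intros Ht.
  rewrite (dot_orthonormal_expand _ _ _ _ (dot_TT t u Ht) (dot_NN t u Ht) (dot_TN t u Ht)).
  fold (Bg gam t u).
  rewrite (dot_comm (Vdu (Bg gam) t u) (Tg gam t u)), dot_T_VduB,
    (dot_comm _ (Ng gam t u)), (dot_Vdt_unit a b (Ng gam)),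
    (dot_comm (Vdu (Bg gam) t u) (Bg gam t u)), (dot_Vdu_unit a b (Bg gam));
    auto using vsmooth_N, vsmooth_B, dot_NN, dot_BB.
  ring.
Qed.

Variable theta : R -> R -> R.
Hypothesis theta_smooth : smooth theta.
Hypothesis flow : forall t u, in_strip t ->
  Vdt gam t u = vscal (kappa gam t u) (nu_theta gam theta t u).

Lemma psi3_speed t u : in_strip t ->
  psi3 gam theta t u * speed gam t u = twist_u t u + du theta t u.
Proof.
  intros Ht. rewrite <- tau_speed by exact Ht. pose proof (speed_pos t u Ht).
  unfold psi3, ds. field. lra.
Qed.

Lemma smooth_psi1 : smooth (psi1 gam theta).
Proof. exact (smooth_mult a b _ _ smooth_kappa (smooth_cos a b _ theta_smooth)). Qed.

Lemma smooth_psi2 : smooth (psi2 gam theta).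
Proof. exact (smooth_mult a b _ _ smooth_kappa (smooth_sin a b _ theta_smooth)). Qed.

Lemma Vdt_gam t u : in_strip t ->
  Vdt gam t u =
  vadd (vscal (psi1 gam theta t u) (Ng gam t u)) (vscal (psi2 gam theta t u) (Bg gam t u)).
Proof.
  intros Ht. rewrite flow by exact Ht. unfold nu_theta.
  now rewrite vscal_vadd, !vscal_vscal.
Qed.

Lemma dot_Vdu_Vdt_gam_B t u : in_strip t ->
  dot (Vdu (Vdt gam) t u) (Bg gam t u) =
  psi1 gam theta t u * twist_u t u + du (psi2 gam theta) t u.
Proof.
  intros Ht.
  rewrite (Vdu_ext (Vdt gam) (fun t u => vadd (vscal (psi1 gam theta t u) (Ng gam t u))
                                           (vscal (psi2 gam theta t u) (Bg gam t u))) t u)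
    by (intros v; apply Vdt_gam, Ht).
  rewrite (Vdu_add a b), !(Vdu_scal a b), !dot_add_l, !dot_scal_l, dot_NB, dot_BB;
    auto using smooth_psi1, smooth_psi2, vsmooth_scal, vsmooth_N, vsmooth_B.
  rewrite (dot_comm (Vdu (Bg gam) t u)), (dot_Vdu_unit a b (Bg gam));
    auto using vsmooth_B, dot_BB.
  unfold twist_u. ring.
Qed.

Lemma speed_dot_VdtT_B t u : in_strip t ->
  speed gam t u * dot (Vdt (Tg gam) t u) (Bg gam t u) =
  psi1 gam theta t u * twist_u t u + du (psi2 gam theta) t u.
Proof.
  intros Ht. rewrite <- dot_Vdu_Vdt_gam_B, <- (Vdt_Vdu a b) by auto.
  unfold Tg at 1, Vds at 1.
  rewrite (Vdt_scal a b), dot_add_l, !dot_scal_l, Vdu_gam, dot_scal_l, dot_TB;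
    auto using smooth_inv_speed, vsmooth_Vdu.
  field. now apply speed_neq0.
Qed.

Lemma du_psi2 t u : in_strip t ->
  du (psi2 gam theta) t u =
  du (kappa gam) t u * sin (theta t u) + kappa gam t u * (du theta t u * cos (theta t u)).
Proof.
  intros Ht. unfold du at 1, psi2.
  rewrite (Derive_mult (fun v => kappa gam t v) (fun v => sin (theta t v))),
    (Derive_comp sin (fun v => theta t v)), (is_derive_unique sin _ _ (is_derive_sin _)).
  - reflexivity.
  - eexists. apply is_derive_sin.
  - now apply (smooth_ex_derive_u a b).
  - apply (smooth_ex_derive_u a b (kappa gam)); auto using smooth_kappa.
  - apply (smooth_ex_derive_u a b (fun t u => sin (theta t u))); auto using smooth_sin.
Qed.

Lemma dt_twist_u t u : in_strip t ->
  dt twist_u t u = du twist_t t u + torsion_rate gam theta t u * speed gam t u.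
Proof.
  intros Ht.
  pose proof (dt_twist_u_minus_du_twist_t t u Ht) as E.
  rewrite dot_VduN_VdtB, dot_VdtN_VduB in E by auto.
  pose proof (speed_dot_VdtT_B t u Ht) as F.
  rewrite du_psi2, <- tau_speed in F by exact Ht.
  pose proof (speed_pos t u Ht).
  unfold torsion_rate, psi1, psi2, psi3, ds.
  set (X := dot (Vdt (Tg gam) t u) (Bg gam t u)) in *.
  replace (dt twist_u t u) with (du twist_t t u + kappa gam t u * (speed gam t u * X))
    by lra.
  rewrite F. unfold psi1. field. lra.
Qed.

End FramedCurve.

(** * Periodicity in the curve parameter *)

Section Periodicity.
Variables (a b L : R).
Local Notation in_strip := (in_strip a b).

Definition periodic (f : R -> R -> R) : Prop :=
  forall t u, in_strip t -> f t (u + L) = f t u.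

Definition vperiodic (F : R -> R -> V3) : Prop :=
  forall t u, in_strip t -> F t (u + L) = F t u.

Lemma vperiodic_Vdu F : vperiodic F -> vperiodic (Vdu F).
Proof.
  intros HF t u Ht. unfold Vdu, du. rewrite <- !Derive_shift.
  f_equal; apply Derive_ext; intros v; now rewrite HF.
Qed.

Lemma vperiodic_Vdt F : vperiodic F -> vperiodic (Vdt F).
Proof.
  intros HF t u Ht. unfold Vdt, dt.
  f_equal; apply Derive_ext_loc, (locally_strip_impl a b); auto; intros s Hs; now rewrite HF.
Qed.

Lemma periodic_inv f : periodic f -> periodic (fun t u => / f t u).
Proof. intros Hf t u Ht. now rewrite Hf. Qed.

Lemma periodic_vnorm F : vperiodic F -> periodic (fun t u => vnorm (F t u)).
Proof. intros HF t u Ht. now rewrite HF. Qed.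

Lemma periodic_dot F G :
  vperiodic F -> vperiodic G -> periodic (fun t u => dot (F t u) (G t u)).
Proof. intros HF HG t u Ht. now rewrite HF, HG. Qed.

Lemma vperiodic_scal c F :
  periodic c -> vperiodic F -> vperiodic (fun t u => vscal (c t u) (F t u)).
Proof. intros Hc HF t u Ht. now rewrite Hc, HF. Qed.

Lemma vperiodic_cross F G :
  vperiodic F -> vperiodic G -> vperiodic (fun t u => cross (F t u) (G t u)).
Proof. intros HF HG t u Ht. now rewrite HF, HG. Qed.

Lemma periodic_twist_t gam : vperiodic gam -> periodic (twist_t gam).
Proof.
  intros Hgam.
  assert (Hspeed : periodic (speed gam)) by exact (periodic_vnorm _ (vperiodic_Vdu _ Hgam)).
  assert (HT : vperiodic (Tg gam))
    by exact (vperiodic_scal _ _ (periodic_inv _ Hspeed) (vperiodic_Vdu _ Hgam)).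
  assert (HK : vperiodic (Vds gam (Tg gam)))
    by exact (vperiodic_scal _ _ (periodic_inv _ Hspeed) (vperiodic_Vdu _ HT)).
  assert (HN : vperiodic (Ng gam))
    by exact (vperiodic_scal _ _ (periodic_inv _ (periodic_vnorm _ HK)) HK).
  exact (periodic_dot _ _ (vperiodic_Vdt _ HN) (vperiodic_cross _ _ HT HN)).
Qed.

Lemma RInt_du_periodic f t : smooth a b f -> periodic f -> in_strip t ->
  RInt (fun v => du f t v) 0 L = 0.
Proof.
  intros Hf Hper Ht. rewrite (RInt_du a b) by assumption.
  rewrite <- (Rplus_0_l L), Hper by assumption. apply Rminus_diag_eq. reflexivity.
Qed.

End Periodicity.

(** * Time derivative of the total torsion *)

Lemma IZR_lt_1_eq_0 (k : Z) : Rabs (IZR k) < 1 -> k = 0%Z.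
Proof.
  intros Hk. rewrite Rabs_Zabs in Hk. apply lt_IZR in Hk. lia.
Qed.

(* A continuous function with values in the lattice [c Z] is locally constant. *)
Lemma is_derive_lattice_valued (c : R) (h : R -> R) (t : R) :
  0 < c -> continuous h t -> locally t (fun s => exists k : Z, h s = c * IZR k) ->
  is_derive h t 0.
Proof.
  intros Hc Hcont Hlat.
  destruct (locally_singleton _ _ Hlat) as [kt Hkt].
  assert (Hnear : locally t (fun s => Rabs (h s - h t) < c))
    by exact (Hcont _ (locally_ball (h t) (mkposreal c Hc))).
  apply (is_derive_ext_loc (fun _ => h t)); [|exact (is_derive_const (h t) t)].
  apply (filter_imp (fun s => Rabs (h s - h t) < c /\ exists k : Z, h s = c * IZR k));
    [|now apply filter_and].
  intros s [Hs [k Hk]].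
  rewrite Hk, Hkt in Hs. rewrite Hk, Hkt.
  replace (c * IZR k - c * IZR kt) with (c * IZR (k - kt)) in Hs by (rewrite minus_IZR; ring).
  rewrite Rabs_mult, (Rabs_pos_eq c) in Hs by lra.
  assert (Hd : (k - kt)%Z = 0%Z).
  { apply IZR_lt_1_eq_0, (Rmult_lt_reg_l c); lra. }
  now replace k with kt by lia.
Qed.

Section TotalTorsion.
Variables (a b : R) (gam : R -> R -> V3) (theta : R -> R -> R).
Local Notation in_strip := (in_strip a b).
Hypothesis gam_smooth : vsmooth a b gam.
Hypothesis theta_smooth : smooth a b theta.
Hypothesis gam_periodic : vperiodic a b (2 * PI) gam.
Hypothesis theta_lift : forall t u, in_strip t ->
  exists k : Z, theta t (u + 2 * PI) = theta t u + 2 * PI * IZR k.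
Hypothesis speed_pos : forall t u, in_strip t -> 0 < speed gam t u.
Hypothesis kappa_pos : forall t u, in_strip t -> 0 < kappa gam t u.
Hypothesis flow : forall t u, in_strip t ->
  Vdt gam t u = vscal (kappa gam t u) (nu_theta gam theta t u).

Lemma curve_int_tau s : in_strip s ->
  curve_int gam (tau gam) s = RInt (fun v => twist_u gam s v) 0 (2 * PI).
Proof. intros Hs. apply RInt_ext. intros v _. now apply (tau_speed a b). Qed.

Lemma curve_int_psi3 s : in_strip s ->
  curve_int gam (psi3 gam theta) s =
  RInt (fun v => twist_u gam s v) 0 (2 * PI) + (theta s (2 * PI) - theta s 0).
Proof.
  intros Hs. rewrite <- (RInt_du a b theta s) by assumption.
  transitivity (RInt (fun v => twist_u gam s v + du theta s v) 0 (2 * PI)).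
  - apply RInt_ext. intros v _. now apply (psi3_speed a b).
  - apply (RInt_plus (V := R_CompleteNormedModule)); apply (ex_RInt_smooth a b);
      auto using smooth_twist_u, smooth_du.
Qed.

Lemma is_derive_winding t : in_strip t ->
  is_derive (fun s => theta s (2 * PI) - theta s 0) t 0.
Proof.
  intros Ht. apply (is_derive_lattice_valued (2 * PI)).
  - pose proof PI_RGT_0. lra.
  - apply (continuous_minus (fun s => theta s (2 * PI)) (fun s => theta s 0));
      now apply (smooth_continuous_t a b).
  - apply (locally_strip_impl a b); auto. intros s Hs.
    destruct (theta_lift s 0 Hs) as [k Hk]. exists k. rewrite Rplus_0_l in Hk. lra.
Qed.

Lemma is_derive_RInt_twist_u t : in_strip t ->
  is_derive (fun s => RInt (fun v => twist_u gam s v) 0 (2 * PI)) t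
    (curve_int gam (torsion_rate gam theta) t).
Proof.
  intros Ht.
  pose proof (smooth_twist_u a b gam gam_smooth speed_pos kappa_pos) as Hu.
  pose proof (smooth_twist_t a b gam gam_smooth speed_pos kappa_pos) as Hv.
  replace (curve_int gam (torsion_rate gam theta) t)
    with (RInt (fun v => dt (twist_u gam) t v) 0 (2 * PI)).
  { now apply (is_derive_RInt_smooth a b). }
  transitivity (RInt (fun v => dt (twist_u gam) t v - du (twist_t gam) t v) 0 (2 * PI)).
  - rewrite (RInt_minus (V := R_CompleteNormedModule)), (RInt_du_periodic a b (2 * PI))
      by (auto using periodic_twist_t;
          apply (ex_RInt_smooth a b); auto using smooth_dt, smooth_du).
    exact (eq_sym (Rminus_0_r _)).
  - apply RInt_ext. intros v _.
    rewrite (dt_twist_u a b gam gam_smooth speed_pos kappa_pos theta theta_smooth flow t v Ht).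
    apply Rplus_minus_l.
Qed.

Lemma is_derive_total_torsion t : in_strip t ->
  is_derive (curve_int gam (tau gam)) t (curve_int gam (torsion_rate gam theta) t).
Proof.
  intros Ht. apply (is_derive_ext_loc (fun s => RInt (fun v => twist_u gam s v) 0 (2 * PI))).
  - apply (locally_strip_impl a b); auto. intros s Hs. symmetry. now apply curve_int_tau.
  - now apply is_derive_RInt_twist_u.
Qed.

Lemma is_derive_total_psi3 t : in_strip t ->
  is_derive (curve_int gam (psi3 gam theta)) t (curve_int gam (torsion_rate gam theta) t).
Proof.
  intros Ht. rewrite <- (Rplus_0_r (curve_int _ _ t)).
  apply (is_derive_ext_loc (fun s => RInt (fun v => twist_u gam s v) 0 (2 * PI)
                                     + (theta s (2 * PI) - theta s 0))).
  - apply (locally_strip_impl a b); auto. intros s Hs. symmetry. now apply curve_int_psi3.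
  - apply (is_derive_plus (fun s => RInt (fun v => twist_u gam s v) 0 (2 * PI)));
      [now apply is_derive_RInt_twist_u|now apply is_derive_winding].
Qed.

End TotalTorsion.

Theorem mainTheorem9
  (tbar : R) (gam : R -> R -> V3) (theta upsilon : R -> R -> R) :
  0 < tbar ->
  (* smoothness of the solution on (0, tbar) x S^1 *)
  Vsmooth_on (fun t _ => 0 < t < tbar) gam ->
  smooth_on (fun t _ => 0 < t < tbar) theta ->
  (* closed curves: 2 PI-periodic parametrization; theta is an S^1-valued
     angle, represented by a real lift *)
  (forall t u, 0 < t < tbar -> gam t (u + 2 * PI) = gam t u) ->
  (forall t u, 0 < t < tbar ->
     exists k : Z, theta t (u + 2 * PI) = theta t u + 2 * PI * IZR k) ->
  (* regular curves with positive curvature *)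
  (forall t u, 0 < t < tbar -> 0 < speed gam t u) ->
  (forall t u, 0 < t < tbar -> 0 < kappa gam t u) ->
  (* framed curvature flow *)
  (forall t u, 0 < t < tbar ->
     Vdt gam t u = vscal (kappa gam t u) (nu_theta gam theta t u)) ->
  (forall t u, 0 < t < tbar -> dt theta t u = upsilon t u) ->
  forall t, 0 < t < tbar ->
    let rhs := curve_int gam
      (fun s u => psi1 gam theta s u * psi3 gam theta s u * kappa gam s u
                  + psi2 gam theta s u * ds gam (kappa gam) s u) t in
    is_derive (fun s => curve_int gam (tau gam) s) t rhs /\
    is_derive (fun s => curve_int gam (psi3 gam theta) s) t rhs.
Proof.
  intros _ (Hx & Hy & Hz) Htheta Hper Hlift Hspeed Hkappa Hflow _ t Ht rhs.
  assert (Hgam : vsmooth 0 tbar gam).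
  { split; [|split]; apply smooth_on_smooth; assumption. }
  apply smooth_on_smooth in Htheta.
  split; [apply (is_derive_total_torsion 0 tbar)|apply (is_derive_total_psi3 0 tbar)]; assumption.
Qed.
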